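(* Let $n,k,j,i$ be integers with $n \geq k > 0$, $0 \le j < n$, and $i \geq 1$. Then $$f_{(n,k) \setminus (j),i}(q) = q^{i^2} \left( \begin{bmatrix} n-j \\ i \end{bmatrix}_q \begin{bmatrix} k \\ i \end{bmatrix}_q - \begin{bmatrix} n+1 \\ i \end{bmatrix}_q \begin{bmatrix} k-j-1 \\ i \end{bmatrix}_q \right).$$
   Context: For partitions $\mu\subseteq\lambda$, the skew shape $\lambda\setminus\mu$ is the set of boxes of the Ferrers diagram of $\lambda$ (row $r$ has $\lambda_r$ left-justified boxes, rows numbered top to bottom) not in that of $\mu$. Thus $(n,k)\setminus(j)$ has a top row occupying columns $j+1,\dots,n$ and a bottom row occupying columns $1,\dots,k$. A standard Young tableau of shape $\lambda\setminus\mu$ with $N$ boxes is a filling with $1,\dots,N$, each used once, increasing left to right along rows and top to bottom down columns. Such a tableau $\tau$ has a descent at $m$ ($1\le m\le N-1$) if $m+1$ lies in a strictly lower row than $m$; $\mathrm{des}(\tau)$ is the number of descents and $\mathrm{maj}(\tau)$ is the sum of the descents. $f_{\lambda\setminus\mu,i}(q)=\sum_{\tau} q^{\mathrm{maj}(\tau)}$, summed over standard Young tableaux $\tau$ of shape $\lambda\setminus\mu$ with $\mathrm{des}(\tau)=i$ (for $\mu=\emptyset$ write $f_{\lambda,i}$). The $q$-binomial coefficient is $\begin{bmatrix} M \\ N \end{bmatrix}_q = \frac{(q)_M}{(q)_N(q)_{M-N}}$ with $(q)_m=(1-q)\cdots(1-q^m)$ when $0\le N\le M$ are integers, and $\begin{bmatrix}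 M \\ N \end{bmatrix}_q =0$ otherwise. *)

From HB Require Import structures.
From mathcomp Require Import all_boot all_order all_algebra.
Set Implicit Arguments. Unset Strict Implicit. Unset Printing Implicit Defensive.
Import Order.TTheory GRing.Theory Num.Theory.
Local Open Scope ring_scope.

(* Boxes of the skew shape (n,k)\(j):
   inl p (p : 'I_(n-j)) = top row, column j+1+p;
   inr c (c : 'I_k)     = bottom row, column c+1. *)
Definition skbox (n k j : nat) : finType := ('I_(n - j) + 'I_k)%type.

(* Number of boxes N = (n-j)+k. A filling stores entry (x+1) as x : 'I_N. *)
Definition skN (n k j : nat) : nat := ((n - j) + k)%N.

Definition filling (n k j : nat) := {ffun skbox n k j -> 'I_(skN n k j)}.

(* standard Young tableau: each of 1..N used exactly once (bijectivity,
   equivalent to injectivity since the domain and codomain both have N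
   elements), rows increasing left to right, columns increasing downwards. *)
Definition isSYT (n k j : nat) (T : filling n k j) : bool :=
  [&& injectiveb T,
      [forall p : 'I_(n - j), forall p' : 'I_(n - j),
         (p < p')%N ==> (T (inl p) < T (inl p'))%N],
      [forall c : 'I_k, forall c' : 'I_k,
         (c < c')%N ==> (T (inr c) < T (inr c'))%N] &
      [forall p : 'I_(n - j), forall c : 'I_k,
         (j + p == c)%N ==> (T (inl p) < T (inr c))%N]].

Definition in_top (n k j : nat) (T : filling n k j) (m : nat) : bool :=
  [exists p : 'I_(n - j), (T (inl p) : nat) == m.-1].
Definition in_bot (n k j : nat) (T : filling n k j) (m : nat) : bool :=
  [exists c : 'I_k, (T (inr c) : nat) == m.-1].

(* descents: 1 <= m <= N-1 with m+1 in a strictly lower row than m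
   (for two rows: m in the top row and m+1 in the bottom row) *)
Definition descents (n k j : nat) (T : filling n k j) : seq nat :=
  [seq m <- iota 1 (skN n k j).-1 | in_top T m && in_bot T m.+1].

Definition des (n k j : nat) (T : filling n k j) : nat := size (descents T).
Definition maj (n k j : nat) (T : filling n k j) : nat := sumn (descents T).

Definition f_skew (n k j i : nat) : {poly rat} :=
  \sum_(T : filling n k j | isSYT T && (des T == i)) 'X^(maj T).

Definition qpoch (m : nat) : {poly rat} := \prod_(1 <= t < m.+1) (1 - 'X^t).

Definition qbinom (M N : int) : {poly rat} :=
  if (0 <= N) && (N <= M) then
    qpoch `|M|%N %/ (qpoch `|N|%N * qpoch `|M - N|%N)
  else 0.

(* Record, for m = 1, ..., N, whether the entry m of a standard tableau of shape
   (n,k)\(j) lies in the top row (true) or in the bottom row (false). This is a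
   bijection onto the words with n-j letters true and k letters false in which every
   prefix has at most j more false than true (the column condition becomes this ballot
   condition), and the descents of the tableau are the ends of the factors [true; false].
   Hence f is the major-index generating function of these ballot words. Splitting off
   the last letters gives a four-term recurrence in the numbers of letters and of
   descents. By q-Pascal, every q^(i^2) [x i]_q [y i]_q satisfies it, so both terms of
   q^(i^2) ([a i]_q [b i]_q - [a+j+1 i]_q [b-j-1 i]_q) do, and the reflected second term
   makes the boundary values match. *)
From HB Require Import structures.
From mathcomp Require Import all_boot all_order all_algebra.
From mathcomp Require Import ring zify.
Set Implicit Arguments.
Unset Strict Implicit.
Unset Printing Implicit Defensive.
Import Order.TTheory GRing.Theory Num.Theory.
Local Open Scope ring_scope.

Fixpoint qbin (M N : nat) : {poly rat} :=
  match M, N with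
  | _, 0 => 1
  | 0, _.+1 => 0
  | M'.+1, N'.+1 => qbin M' N'.+1 + 'X^(M' - N') * qbin M' N'
  end.

Lemma qbin0 M : qbin M 0 = 1.
Proof. by case: M. Qed.

Lemma qbin_small M N : (M < N)%N -> qbin M N = 0.
Proof.
elim: M N => [|M IH] [|N] //= ltMN.
by rewrite !IH ?mulr0 ?addr0 // ltnW.
Qed.

Lemma qbinn M : qbin M M = 1.
Proof. by elim: M => //= M ->; rewrite qbin_small // subnn mulr1 add0r. Qed.

Lemma qpochS M : qpoch M.+1 = qpoch M * (1 - 'X^(M.+1)).
Proof. by rewrite /qpoch big_nat_recr. Qed.

Lemma qpoch0 : qpoch 0 = 1.
Proof. by rewrite /qpoch big_geq. Qed.

Lemma qpoch_qbin M N : (N <= M)%N -> qpoch M = qbin M N * (qpoch N * qpoch (M - N)).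
Proof.
elim: M N => [|M IH] [|N] //=; rewrite ?subn0 ?qpoch0 ?mul1r // ltnS => leNM.
case: (ltngtP N M) leNM => // [ltNM _|-> _]; last first.
  by rewrite qbin_small // qbinn !subnn qpoch0 add0r expr0 !mul1r mulr1.
have eXM : 'X^(M.+1) = 'X^(M - N) * 'X^(N.+1) :> {poly rat}.
  by rewrite -exprD addnS subnK // ltnW.
have qpochMN : qpoch (M - N) = qpoch (M - N.+1) * (1 - 'X^(M - N)).
  by rewrite -subnSK // qpochS subnSK.
rewrite subSS qpochS eXM [qpoch N.+1]qpochS qpochMN.
have -> : qpoch M * (1 - 'X^(M - N) * 'X^(N.+1)) =
          qpoch M * (1 - 'X^(M - N)) + 'X^(M - N) * (1 - 'X^(N.+1)) * qpoch M by ring.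
by rewrite {1}(IH N.+1 ltNM) (IH N (ltnW ltNM)) qpochMN qpochS; ring.
Qed.

Lemma qpoch_neq0 M : qpoch M != 0.
Proof.
rewrite /qpoch prodf_seq_neq0; apply/allP => t; rewrite mem_index_iota => /andP[t_gt0 _].
apply: contraTneq isT => /(congr1 (horner^~ 0)).
by rewrite !hornerE expr0n eqn0Ngt t_gt0 subr0 => /eqP; rewrite oner_eq0.
Qed.

Lemma qbinomE M N : qbinom M%:Z N%:Z = qbin M N.
Proof.
rewrite /qbinom lez_nat /=; case: leqP => [leNM|/qbin_small->//].
by rewrite subzn // !absz_nat (qpoch_qbin leNM) mulpK // mulf_neq0 ?qpoch_neq0.
Qed.

Lemma qbinom_gt (M N : int) : M < N -> qbinom M N = 0.
Proof. by rewrite /qbinom ltNge => /negbTE->; rewrite andbF. Qed.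

Definition qbin_prod (x y i : nat) : {poly rat} := 'X^(i ^ 2) * (qbin x i * qbin y i).

Lemma qbin_prodC x y i : qbin_prod x y i = qbin_prod y x i.
Proof. by rewrite /qbin_prod [qbin x i * _]mulrC. Qed.

Lemma qbin_prod0r x i : qbin_prod x 0 i = (i == 0)%:R.
Proof. by case: i => [|i]; rewrite /qbin_prod ?qbin0 /= ?mulr1 ?mulr0. Qed.

Lemma qbin_prod_rec x y i :
  qbin_prod x.+1 y.+1 i = qbin_prod x y.+1 i + qbin_prod x.+1 y i - qbin_prod x y i
    + (if i is i'.+1 then 'X^((x + y).+1) * qbin_prod x y i' else 0).
Proof.
case: i => [|i]; first by rewrite /qbin_prod !qbin0; ring.
rewrite /qbin_prod /=.
case: (leqP i x) => [leix|/qbin_small->]; last by ring.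
case: (leqP i y) => [leiy|/qbin_small->]; last by ring.
have eXi : 'X^(i.+1 ^ 2) = 'X^(i ^ 2) * 'X^i * 'X^i * 'X :> {poly rat}.
  by rewrite -!exprD -[X in _ * X]expr1 -exprD; congr (_ ^+ _); lia.
have eXxy : 'X^((x + y).+1) = 'X^(x - i) * 'X^(y - i) * 'X^i * 'X^i * 'X :> {poly rat}.
  by rewrite -!exprD -[X in _ * X]expr1 -exprD; congr (_ ^+ _); lia.
by rewrite eXi eXxy; ring.
Qed.

Section SkewFormula.
Variable j : nat.

Definition skew_formula (a b i : nat) : {poly rat} :=
  qbin_prod a b i - (if (j < b)%N then qbin_prod (a + j).+1 (b - j.+1) i else 0).

Lemma skew_formula_b0 a i : skew_formula a 0 i = (i == 0)%:R.
Proof. by rewrite /skew_formula qbin_prod0r subr0. Qed.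

Lemma skew_formula_edge a i : skew_formula a (a + j).+1 i = 0.
Proof. by rewrite /skew_formula ltnS leq_addl subSS addnK qbin_prodC subrr. Qed.

Lemma skew_formula_rec a b i : (b < a + j)%N ->
  skew_formula a b.+1 i = skew_formula a b i +
    if a is a'.+1 then skew_formula a' b.+1 i - skew_formula a' b i
      + (if i is i'.+1 then 'X^(a + b) * skew_formula a' b i' else 0)
    else 0.
Proof.
rewrite /skew_formula; case: a => [|a] lt_b_aj.
  rewrite add0n in lt_b_aj; rewrite ltnS leqNgt lt_b_aj ltnNge (ltnW lt_b_aj) /=.
  by rewrite qbin_prodC [qbin_prod 0 b i]qbin_prodC !qbin_prod0r !subr0 addr0.
rewrite qbin_prod_rec; case: (ltngtP j b) => [lt_jb|lt_bj|<-].
- rewrite ltnS (ltnW lt_jb) subSS -(subnSK lt_jb) qbin_prod_rec.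
  have -> : ((a + j).+1 + (b - j.+1)).+1 = (a.+1 + b)%N by lia.
  by case: i => [|i]; rewrite ?addSn; ring.
- by rewrite ltnS leqNgt lt_bj; case: i => [|i]; rewrite ?addSn; ring.
- by rewrite ltnSn subnn !qbin_prod0r; case: i => [|i]; rewrite ?addSn; ring.
Qed.

End SkewFormula.

Fixpoint bool_words (m : nat) : seq (seq bool) :=
  if m is m'.+1 then
    [seq rcons s true | s <- bool_words m'] ++ [seq rcons s false | s <- bool_words m']
  else [:: [::]].

Lemma size_bool_words m s : s \in bool_words m -> size s = m.
Proof.
elim: m s => [|m IH] s /=; first by rewrite inE => /eqP->.
by rewrite mem_cat => /orP[] /mapP[t /IH <- ->]; rewrite size_rcons.
Qed.

Lemma mem_bool_words s : s \in bool_words (size s).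
Proof.
elim/last_ind: s => [|s x IH]; first by rewrite inE.
by rewrite size_rcons /= mem_cat; case: x; rewrite (map_f _ IH) ?orbT.
Qed.

Lemma uniq_bool_words m : uniq (bool_words m).
Proof.
have rcons_inj (x : bool) : injective (rcons^~ x) by move=> s t /rcons_inj[].
elim: m => //= m IH; rewrite cat_uniq !(map_inj_uniq (rcons_inj _)) IH andbT /=.
apply/hasPn => _ /mapP[s _ ->]; apply/mapP => -[t _ /(congr1 (last false))].
by rewrite !last_rcons.
Qed.

Lemma big_bool_wordsS m (P : pred (seq bool)) (F : seq bool -> {poly rat}) :
  \sum_(s <- bool_words m.+1 | P s) F s =
  \sum_(s <- bool_words m | P (rcons s true)) F (rcons s true) +
  \sum_(s <- bool_words m | P (rcons s false)) F (rcons s false).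
Proof. by rewrite big_cat !big_map. Qed.

Definition word_descents (s : seq bool) : seq nat :=
  [seq m <- iota 1 (size s).-1 | nth false s m.-1 && ~~ nth false s m].

Definition word_maj (s : seq bool) : nat := sumn (word_descents s).

Definition ballot (j : nat) (s : seq bool) : bool :=
  all (fun t => count_mem false (take t s) <= count_mem true (take t s) + j)%N
      (iota 0 (size s).+1).

Lemma count_rcons_mem (s : seq bool) x y :
  count_mem y (rcons s x) = (count_mem y s + (x == y))%N.
Proof. by rewrite -cats1 count_cat /= addn0. Qed.

Lemma count_mem_true_false (s : seq bool) :
  (count_mem true s + count_mem false s)%N = size s.
Proof. by rewrite -(count_predC (pred1 true)); congr addn; apply: eq_count => -[]. Qed.

Lemma word_descents_rcons s x : word_descents (rcons s x) =
  word_descents s ++ (if last false s && ~~ x then [:: size s] else [::]).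
Proof.
case/lastP: s => [|s y]; first by case: x.
rewrite /word_descents !size_rcons !succnK -[X in iota _ X]addn1 iotaD.
rewrite filter_cat add1n last_rcons; congr (_ ++ _).
  apply: eq_in_filter => m; rewrite mem_iota add1n => /andP[m_gt0 lt_ms].
  by rewrite !nth_rcons size_rcons lt_ms (leq_ltn_trans (leq_pred m) lt_ms).
by rewrite /= !nth_rcons size_rcons !ltnn ltnSn !eqxx.
Qed.

Lemma ballot_rcons j s x : ballot j (rcons s x) =
  ballot j s && (count_mem false (rcons s x) <= count_mem true (rcons s x) + j)%N.
Proof.
rewrite /ballot size_rcons -[X in iota _ X]addn1 iotaD all_cat add0n [iota _ 1]/= all_seq1.
rewrite take_oversize ?size_rcons //; congr andb.
apply: eq_in_all => t; rewrite mem_iota add0n ltnS => le_ts.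
by rewrite -cats1 takel_cat.
Qed.

Lemma ballot_count j s : ballot j s -> (count_mem false s <= count_mem true s + j)%N.
Proof. by move/allP/(_ (size s)); rewrite mem_iota ltnS leqnn take_size => ->. Qed.

Lemma count_mem_false_size a b s :
  size s = (a + b)%N -> count_mem true s = a -> count_mem false s = b.
Proof.
move=> size_s count_s; apply/eqP.
by rewrite -(eqn_add2l a) -{1}count_s count_mem_true_false size_s.
Qed.

Lemma eq_in_big_seq_cond (I : eqType) (r : seq I) (P Q : pred I) (F G : I -> {poly rat}) :
  {in r, P =1 Q} -> {in r, forall s, Q s -> F s = G s} ->
  \sum_(s <- r | P s) F s = \sum_(s <- r | Q s) G s.
Proof.
move=> eqPQ eqFG; rewrite big_seq_cond [RHS]big_seq_cond.
apply: eq_big => [s|s /andP[s_r Ps]]; last by apply: eqFG; rewrite -?eqPQ.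
by case s_r: (s \in r); rewrite /= ?eqPQ ?s_r.
Qed.

Section BallotWords.
Variable j : nat.

Definition ballot_word (a i : nat) (s : seq bool) : bool :=
  [&& count_mem true s == a, ballot j s & size (word_descents s) == i].

Definition ballot_gf (a b i : nat) : {poly rat} :=
  \sum_(s <- bool_words (a + b) | ballot_word a i s) 'X^(word_maj s).

(* The empty word counts as ending in [false], since [last false [::] = false]. *)
Definition ballot_gf_last (a b i : nat) (x : bool) : {poly rat} :=
  \sum_(s <- bool_words (a + b) | ballot_word a i s && (last false s == x)) 'X^(word_maj s).

Lemma ballot_gf_split a b i :
  ballot_gf a b i = ballot_gf_last a b i true + ballot_gf_last a b i false.
Proof.
rewrite /ballot_gf /ballot_gf_last [LHS](bigID (fun s => last false s)).
by congr (_ + _); apply: eq_bigl => s; rewrite ?eqb_id ?eqbF_neg.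
Qed.

Lemma ballot_word_rcons_true a i s :
  ballot_word a i (rcons s true) = if a is a'.+1 then ballot_word a' i s else false.
Proof.
rewrite /ballot_word ballot_rcons !count_rcons_mem word_descents_rcons andbF cats0 addn0 addn1.
case: a => [|a]; first by [].
rewrite eqSS; case: (boolP (ballot j s)) => [/ballot_count le_ft|]; last by rewrite !andbF.
by rewrite (leq_trans le_ft) // leq_add2r.
Qed.

Lemma ballot_word_rcons_false a i s : ballot_word a i (rcons s false) =
  [&& count_mem true s == a, ballot j s, (count_mem false s < count_mem true s + j)%N
    & size (word_descents s) + last false s == i]%N.
Proof.
rewrite /ballot_word ballot_rcons !count_rcons_mem word_descents_rcons andbT addn0 addn1.
by rewrite size_cat; case: (last false s); rewrite ?addn1 ?addn0 -?andbA.
Qed.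

Lemma word_maj_rcons s x : word_maj (rcons s x) =
  (word_maj s + (if last false s && ~~ x then size s else 0))%N.
Proof.
by rewrite /word_maj word_descents_rcons sumn_cat; case: (_ && _); rewrite /= ?addn0.
Qed.

Lemma ballot_gf_last_true a b i :
  ballot_gf_last a b i true = if a is a'.+1 then ballot_gf a' b i else 0.
Proof.
case: a => [|a].
  rewrite /ballot_gf_last big_seq_cond big_pred0 // => s.
  apply/and3P => -[_ /and3P[/eqP no_true _ _] /eqP last_true].
  by have := mem_last false s; rewrite last_true inE /= -has_pred1 has_count no_true.
rewrite /ballot_gf_last /ballot_gf addSn big_bool_wordsS.
rewrite [X in _ + X]big_pred0 ?addr0 => [|s]; last by rewrite last_rcons andbF.
apply: eq_big => [s|s _]; first by rewrite ballot_word_rcons_true last_rcons andbT.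
by rewrite word_maj_rcons andbF addn0.
Qed.

Lemma ballot_gf_last_false a b i : ballot_gf_last a b.+1 i false =
  if (b < a + j)%N then
    (if i is i'.+1 then 'X^(a + b) * ballot_gf_last a b i' true else 0)
    + ballot_gf_last a b i false
  else 0.
Proof.
rewrite /ballot_gf_last addnS big_bool_wordsS big_pred0 ?add0r => [|s]; last first.
  by rewrite last_rcons andbF.
have rcons_falseE s : s \in bool_words (a + b) -> ballot_word a i (rcons s false) =
    (b < a + j)%N && [&& count_mem true s == a, ballot j s
                       & size (word_descents s) + last false s == i]%N.
  move=> /size_bool_words size_s; rewrite ballot_word_rcons_false.
  case: eqP => [count_s|]; last by rewrite andbF.
  rewrite (count_mem_false_size size_s count_s) count_s.
  by case: (b < a + j)%N; rewrite ?andbF.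
case: ltnP => [lt_bj|le_jb]; last first.
  rewrite big_seq_cond big_pred0 // => s; rewrite last_rcons eqxx andbT.
  by apply/andP => -[s_ab]; rewrite rcons_falseE // ltnNge le_jb.
rewrite (bigID (fun s => last false s)) /=; congr (_ + _).
  case: i rcons_falseE => [|i] rcons_falseE.
    rewrite big_seq_cond big_pred0 // => s; rewrite last_rcons eqxx andbT.
    case s_ab: (s \in _) => //=; rewrite rcons_falseE //.
    by case: (last false s); rewrite ?addn1 ?andbF.
  rewrite big_distrr; apply: eq_in_big_seq_cond => s s_ab.
    rewrite last_rcons eqxx andbT rcons_falseE // lt_bj /=.
    by case: (last false s); rewrite ?addn1 ?eqSS ?andbF ?andbT.
  move=> /andP[_ /eqP last_s]; rewrite word_maj_rcons last_s (size_bool_words s_ab).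
  by rewrite exprD mulrC.
apply: eq_in_big_seq_cond => s s_ab.
  rewrite last_rcons eqxx andbT rcons_falseE // lt_bj /=.
  by case: (last false s); rewrite ?addn0 ?andbF ?andbT.
by move=> /andP[_ /eqP last_s]; rewrite word_maj_rcons last_s addn0.
Qed.

Lemma ballot_gf_b0 a i : ballot_gf a 0 i = (i == 0)%:R.
Proof.
elim: a => [|a IH].
  rewrite /ballot_gf big_cons big_nil /ballot_word /ballot /= eq_sym.
  by case: (i == 0)%N; rewrite ?addr0.
rewrite ballot_gf_split ballot_gf_last_true IH /ballot_gf_last.
rewrite big_seq_cond big_pred0 ?addr0 // => s.
apply/negbTE/and3P => -[/size_bool_words size_s /andP[/eqP count_s _]].
case/lastP: s size_s count_s => [//|s x].
rewrite size_rcons addn0 last_rcons count_rcons_mem => -[<-].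
case: x => //; rewrite addn0 => count_s _.
by have := count_size (pred1 true) s; rewrite count_s ltnn.
Qed.

Lemma ballot_gf_over a b i : (a + j < b)%N -> ballot_gf a b i = 0.
Proof.
move=> lt_ajb; rewrite /ballot_gf big_seq_cond big_pred0 // => s.
apply/negbTE/andP => -[s_ab /and3P[/eqP count_s /ballot_count]].
by rewrite (count_mem_false_size (size_bool_words s_ab) count_s) count_s leqNgt lt_ajb.
Qed.

Lemma ballot_gf_rec a b i : (b < a + j)%N ->
  ballot_gf a b.+1 i = ballot_gf a b i +
    if a is a'.+1 then ballot_gf a' b.+1 i - ballot_gf a' b i
      + (if i is i'.+1 then 'X^(a + b) * ballot_gf a' b i' else 0)
    else 0.
Proof.
move=> lt_bj; rewrite ballot_gf_split ballot_gf_last_false lt_bj.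
rewrite [ballot_gf a b i]ballot_gf_split !ballot_gf_last_true.
by case: a {lt_bj} => [|a]; case: i => [|i]; rewrite ?ballot_gf_last_true; ring.
Qed.

Lemma ballot_gf_formula a b i : (b <= (a + j).+1)%N -> ballot_gf a b i = skew_formula j a b i.
Proof.
have [m] := ubnP (a + b); elim: m a b i => // m IH a b i.
case: b => [|b] lt_abm; first by rewrite ballot_gf_b0 skew_formula_b0.
rewrite ltnS; case: (ltngtP b (a + j)) => [lt_bj _|//|->]; last first.
  by rewrite ballot_gf_over ?skew_formula_edge.
rewrite ballot_gf_rec // skew_formula_rec // IH; try lia.
by case: a lt_bj lt_abm => [|a] lt_bj lt_abm; case: i => [|i]; rewrite ?IH //; lia.
Qed.

End BallotWords.

Local Close Scope ring_scope.

Definition positions (s : seq bool) (b : bool) : seq nat :=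
  [seq m <- iota 0 (size s) | nth false s m == b].

Lemma mem_positions s b m : (m \in positions s b) = (m < size s) && (nth false s m == b).
Proof. by rewrite mem_filter mem_iota andbC. Qed.

Lemma sorted_positions s b : sorted ltn (positions s b).
Proof. by rewrite sorted_filter ?iota_ltn_sorted //; exact: ltn_trans. Qed.

Lemma size_positions s b : size (positions s b) = count_mem b s.
Proof.
by rewrite size_filter -[in RHS](mkseq_nth false s) /mkseq count_map.
Qed.

Lemma count_take_positions s b t :
  count_mem b (take t s) = count (gtn t) (positions s b).
Proof.
have ltn_min : [seq m <- iota 0 (size s) | m < t] = iota 0 (minn t (size s)).
  case: leqP => [le_ts|lt_st]; first by have := filter_iota_ltn 0 le_ts; rewrite add0n.
  by apply/all_filterP/allP => m; rewrite mem_iota add0n => /andP[_ /ltn_trans]; apply.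
have -> : count (gtn t) (positions s b) =
          count (fun m => nth false s m == b) [seq m <- iota 0 (size s) | m < t].
  by rewrite count_filter /positions count_filter; apply: eq_count => m; rewrite /= andbC.
rewrite ltn_min -[s in take t s](mkseq_nth false s) /mkseq -map_take take_iota.
by rewrite count_map.
Qed.

Lemma positions_lt s b : all (gtn (size s)) (positions s b).
Proof. by apply/allP => m; rewrite mem_positions => /andP[]. Qed.

Lemma mem_positions_false s m : m \in positions s false -> m \notin positions s true.
Proof. by rewrite !mem_positions => /andP[_ /eqP->]; rewrite andbF. Qed.

Lemma positions_mkseq (P : pred nat) N b (R : seq nat) :
  sorted ltn R -> all (gtn N) R -> {in gtn N, forall m, (P m == b) = (m \in R)} ->
  positions (mkseq P N) b = R.
Proof.
move=> sorted_R R_lt PR; apply: (irr_sorted_eq ltn_trans ltnn) => //.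
  exact: sorted_positions.
move=> m; rewrite mem_positions size_mkseq.
case: (ltnP m N) => [lt_mN|le_Nm]; first by rewrite nth_mkseq // PR.
by apply/esym/negbTE; apply: contraTN le_Nm => /(allP R_lt); rewrite -ltnNge.
Qed.

Lemma sorted_nth_lt_count (L : seq nat) q t : sorted ltn L -> q < size L ->
  (nth 0 L q < t) = (q < count (gtn t) L).
Proof.
elim: L q => // x L IH q /= sorted_xL.
have sorted_L := path_sorted sorted_xL.
have x_lt := order_path_min ltn_trans sorted_xL.
case: (ltnP x t) => [lt_xt|le_tx].
  by case: q => [|q] //= lt_qL; rewrite IH.
have -> : count (gtn t) L = 0.
  apply/eqP; rewrite -leqn0 leqNgt -has_count; apply/hasPn => y /(allP x_lt) lt_xy.
  by rewrite -leqNgt (leq_trans le_tx (ltnW lt_xy)).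
case: q => [|q] /= lt_qL; first by rewrite ltnNge le_tx.
by apply/negbTE; rewrite -leqNgt (leq_trans le_tx (ltnW (allP x_lt _ (mem_nth 0 lt_qL)))).
Qed.

Section BallotColumns.
Variables (j : nat) (L R : seq nat).
Hypotheses (sorted_L : sorted ltn L) (sorted_R : sorted ltn R).

Definition column_strict :=
  forall p c, p < size L -> c < size R -> j + p = c -> nth 0 L p < nth 0 R c.

Lemma column_strict_counts : size R <= size L + j -> column_strict ->
  forall t, count (gtn t) R <= count (gtn t) L + j.
Proof.
move=> le_RLj column t; set r := count (gtn t) R.
case: (leqP r j) => [le_rj|lt_jr]; first exact: leq_trans le_rj (leq_addl _ _).
have le_rR : r <= size R by exact: count_size.
have lt_cR : r.-1 < size R by lia.
have lt_pL : r.-1 - j < size L by lia.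
have lt_Rc : nth 0 R r.-1 < t by rewrite sorted_nth_lt_count // prednK // (leq_trans _ lt_jr).
have := leq_trans (column _ _ lt_pL lt_cR (ltac:(lia))) (ltnW lt_Rc).
by rewrite sorted_nth_lt_count //; lia.
Qed.

Lemma counts_column_strict N : all (gtn N) R -> {in R, forall x, x \notin L} ->
  (forall t, t <= N -> count (gtn t) R <= count (gtn t) L + j) -> column_strict.
Proof.
move=> R_lt disjRL counts p c lt_pL lt_cR def_c; rewrite ltnNge leq_eqVlt negb_or.
have R_c := mem_nth 0 lt_cR; have L_p := mem_nth 0 lt_pL.
apply/andP; split; first by apply: contraTneq L_p => <-; exact: disjRL.
set t := (nth 0 R c).+1.
have := counts t (allP R_lt _ R_c).
have := sorted_nth_lt_count t sorted_R lt_cR; rewrite ltnSn => /esym lt_c_cnt.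
apply: contraTN => lt_Lp; have := sorted_nth_lt_count t sorted_L lt_pL.
by rewrite ltnS leqNgt lt_Lp => /esym/negbT; rewrite -leqNgt; lia.
Qed.

End BallotColumns.

Lemma ballot_column_strict j s :
  ballot j s -> column_strict j (positions s true) (positions s false).
Proof.
move=> ballot_s; apply: (@counts_column_strict _ _ _ _ _ (size s)).
- exact: sorted_positions.
- exact: sorted_positions.
- exact: positions_lt.
- exact: mem_positions_false.
move=> t le_ts; rewrite -!count_take_positions.
by apply: (allP ballot_s); rewrite mem_iota.
Qed.

Lemma sorted_enum_ord m : sorted (relpre val ltn) (enum 'I_m).
Proof. by rewrite -sorted_map val_enum_ord iota_ltn_sorted. Qed.

Section Tableaux.
Variables n k j : nat.
Local Notation a := (n - j).
Local Notation N := (skN n k j).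

Definition top_entries (T : filling n k j) : seq nat := [seq val (T (inl p)) | p <- enum 'I_a].
Definition bot_entries (T : filling n k j) : seq nat := [seq val (T (inr c)) | c <- enum 'I_k].
Definition row_word (T : filling n k j) : seq bool := mkseq (mem (top_entries T)) N.

Lemma size_top_entries T : size (top_entries T) = a.
Proof. by rewrite size_map size_enum_ord. Qed.

Lemma size_bot_entries T : size (bot_entries T) = k.
Proof. by rewrite size_map size_enum_ord. Qed.

Lemma nth_top_entries T (p : 'I_a) : nth 0 (top_entries T) p = T (inl p).
Proof. by rewrite (nth_map p) ?size_enum_ord // nth_ord_enum. Qed.

Lemma nth_bot_entries T (c : 'I_k) : nth 0 (bot_entries T) c = T (inr c).
Proof. by rewrite (nth_map c) ?size_enum_ord // nth_ord_enum. Qed.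

Lemma top_entries_lt T : all (gtn N) (top_entries T).
Proof. by apply/allP => _ /mapP[p _ ->]; exact: ltn_ord. Qed.

Lemma bot_entries_lt T : all (gtn N) (bot_entries T).
Proof. by apply/allP => _ /mapP[c _ ->]; exact: ltn_ord. Qed.

Lemma filling_entries_inj T1 T2 : top_entries T1 = top_entries T2 ->
  bot_entries T1 = bot_entries T2 -> T1 = T2.
Proof.
move=> eq_top eq_bot; apply/ffunP => -[p|c]; apply: val_inj.
  by rewrite /= -!nth_top_entries eq_top.
by rewrite /= -!nth_bot_entries eq_bot.
Qed.

Lemma in_topE T m : in_top T m.+1 = (m \in top_entries T).
Proof.
apply/existsP/mapP => [[p /eqP def_m]|[p _ def_m]]; first by exists p; rewrite ?mem_enum.
by exists p; rewrite -def_m.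
Qed.

Lemma in_botE T m : in_bot T m.+1 = (m \in bot_entries T).
Proof.
apply/existsP/mapP => [[c /eqP def_m]|[c _ def_m]]; first by exists c; rewrite ?mem_enum.
by exists c; rewrite -def_m.
Qed.

Section StandardTableau.
Variable T : filling n k j.
Hypothesis T_SYT : isSYT T.

Lemma SYT_injective : injective T.
Proof. by case/and4P: T_SYT => /injectiveP. Qed.

Lemma sorted_top_entries : sorted ltn (top_entries T).
Proof.
case/and4P: T_SYT => _ /forallP T_top _ _.
apply: homo_sorted (sorted_enum_ord a) => p p' lt_pp'.
by have /forallP/(_ p')/implyP := T_top p; apply.
Qed.

Lemma sorted_bot_entries : sorted ltn (bot_entries T).
Proof.
case/and4P: T_SYT => _ _ /forallP T_bot _.
apply: homo_sorted (sorted_enum_ord k) => c c' lt_cc'.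
by have /forallP/(_ c')/implyP := T_bot c; apply.
Qed.

Lemma column_strict_entries : column_strict j (top_entries T) (bot_entries T).
Proof.
case/and4P: T_SYT => _ _ _ /forallP T_col.
rewrite /column_strict size_top_entries size_bot_entries => p c lt_pa lt_ck def_c.
rewrite -[p]/(val (Ordinal lt_pa)) -[c]/(val (Ordinal lt_ck)) nth_top_entries nth_bot_entries.
by have /forallP/(_ (Ordinal lt_ck))/implyP := T_col (Ordinal lt_pa); apply; apply/eqP.
Qed.

Lemma mem_bot_entries m : m < N -> (m \in bot_entries T) = (m \notin top_entries T).
Proof.
move=> lt_mN; apply/idP/idP => [/mapP[c _ ->]|].
  by apply/mapP => -[p _ /val_inj/SYT_injective].
have card_box : #|'I_N| <= #|skbox n k j| by rewrite card_sum !card_ord.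
have [T' _ T'K] := inj_card_bij SYT_injective card_box.
have := T'K (Ordinal lt_mN); case: (T' _) => [p|c] /(congr1 val)/= def_m.
  by case/negP; apply/mapP; exists p; rewrite ?mem_enum.
by move=> _; apply/mapP; exists c; rewrite ?mem_enum.
Qed.

Lemma positions_row_word b :
  positions (row_word T) b = if b then top_entries T else bot_entries T.
Proof.
apply: positions_mkseq; case: b;
  rewrite ?sorted_top_entries ?sorted_bot_entries ?top_entries_lt ?bot_entries_lt // => m lt_mN.
by rewrite eqbF_neg mem_bot_entries.
Qed.

Lemma descents_row_word : descents T = word_descents (row_word T).
Proof.
rewrite /descents /word_descents size_mkseq; apply: eq_in_filter => m.
rewrite mem_iota => /andP[m_gt0 lt_mN]; have {lt_mN} lt_mN : m < N by lia.
case: m m_gt0 lt_mN => // m _ lt_mN.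
by rewrite in_topE in_botE !nth_mkseq ?(ltnW lt_mN) //= mem_bot_entries.
Qed.

Lemma count_row_word : count_mem true (row_word T) = a.
Proof. by rewrite -size_positions positions_row_word size_top_entries. Qed.

Lemma ballot_row_word : k <= n -> ballot j (row_word T).
Proof.
move=> le_kn; apply/allP => t _; rewrite !count_take_positions !positions_row_word.
apply: column_strict_counts; rewrite ?sorted_top_entries ?sorted_bot_entries //.
  by rewrite size_top_entries size_bot_entries; lia.
exact: column_strict_entries.
Qed.

End StandardTableau.

Lemma row_word_inj T1 T2 : isSYT T1 -> isSYT T2 -> row_word T1 = row_word T2 -> T1 = T2.
Proof.
move=> SYT1 SYT2 eq_w; apply: filling_entries_inj.
  by rewrite -(positions_row_word SYT1 true) -(positions_row_word SYT2 true) eq_w.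
by rewrite -(positions_row_word SYT1 false) -(positions_row_word SYT2 false) eq_w.
Qed.

(* The defaults [lshift k p] and [rshift a c] are never reached when [s] has
   [a] letters [true] and [k] letters [false]. *)
Definition word_filling (s : seq bool) : filling n k j :=
  [ffun x => match x with
   | inl p => insubd (lshift k p) (nth 0 (positions s true) p)
   | inr c => insubd (rshift a c) (nth 0 (positions s false) c)
   end].

Section WordFilling.
Variable s : seq bool.
Hypotheses (size_s : size s = N) (count_s : count_mem true s = a).

Lemma top_entries_word_filling : top_entries (word_filling s) = positions s true.
Proof.
have size_pos : size (positions s true) = a by rewrite size_positions.
rewrite /top_entries -[RHS](mkseq_nth 0) size_pos /mkseq -val_enum_ord -map_comp.
apply: eq_map => p /=; rewrite ffunE val_insubd.
have := mem_nth 0 (_ : p < size (positions s true)); rewrite size_pos ltn_ord.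
by move=> /(_ isT); rewrite mem_positions size_s => /andP[->].
Qed.

Lemma bot_entries_word_filling : bot_entries (word_filling s) = positions s false.
Proof.
have size_pos : size (positions s false) = k.
  by rewrite size_positions (count_mem_false_size size_s count_s).
rewrite /bot_entries -[RHS](mkseq_nth 0) size_pos /mkseq -val_enum_ord -map_comp.
apply: eq_map => c /=; rewrite ffunE val_insubd.
have := mem_nth 0 (_ : c < size (positions s false)); rewrite size_pos ltn_ord.
by move=> /(_ isT); rewrite mem_positions size_s => /andP[->].
Qed.

Lemma row_word_filling : row_word (word_filling s) = s.
Proof.
rewrite /row_word top_entries_word_filling -[RHS](mkseq_nth false) size_s.
apply: eq_mkseq => m /=; rewrite mem_positions eqb_id.
by case: ltnP => // le_sm; rewrite nth_default.
Qed.

Lemma word_filling_SYT : ballot j s -> isSYT (word_filling s).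
Proof.
move=> ballot_s; set T := word_filling s.
have top_T p : (T (inl p) : nat) = nth 0 (positions s true) p.
  by rewrite -nth_top_entries top_entries_word_filling.
have bot_T c : (T (inr c) : nat) = nth 0 (positions s false) c.
  by rewrite -nth_bot_entries bot_entries_word_filling.
have size_top : size (positions s true) = a by rewrite size_positions.
have size_bot : size (positions s false) = k.
  by rewrite size_positions (count_mem_false_size size_s count_s).
have top_neq_bot (p : 'I_a) (c : 'I_k) : nth 0 (positions s true) p != nth 0 (positions s false) c.
  apply/eqP => eq_pc; have := mem_nth 0 (_ : c < size (positions s false)).
  by rewrite size_bot ltn_ord -eq_pc => /(_ isT)/mem_positions_false; rewrite mem_nth ?size_top.
have uniq_pos b : uniq (positions s b) := sorted_uniq ltn_trans ltnn (sorted_positions s b).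
have sorted_nth b (x y : nat) : x < y -> y < size (positions s b) ->
    nth 0 (positions s b) x < nth 0 (positions s b) y.
  move=> lt_xy lt_y; apply: (sorted_ltn_nth ltn_trans 0 (sorted_positions s b)) => //.
  by rewrite inE (ltn_trans lt_xy).
apply/and4P; split.
- apply/injectiveP => -[p|c] [p'|c'] /(congr1 (@nat_of_ord _)); rewrite ?top_T ?bot_T.
  + by move/eqP; rewrite nth_uniq ?size_top // => /eqP/val_inj->.
  + by move/eqP; rewrite (negbTE (top_neq_bot _ _)).
  + by move/esym/eqP; rewrite (negbTE (top_neq_bot _ _)).
  + by move/eqP; rewrite nth_uniq ?size_bot // => /eqP/val_inj->.
- apply/forallP => p; apply/forallP => p'; apply/implyP => lt_pp'.
  by rewrite !top_T sorted_nth ?size_top.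
- apply/forallP => c; apply/forallP => c'; apply/implyP => lt_cc'.
  by rewrite !bot_T sorted_nth ?size_bot.
apply/forallP => p; apply/forallP => c; apply/implyP => /eqP def_c.
by rewrite top_T bot_T; apply: (ballot_column_strict ballot_s); rewrite ?size_top ?size_bot.
Qed.

End WordFilling.
End Tableaux.

Local Open Scope ring_scope.

Lemma f_skew_ballot_gf n k j i : (k <= n)%N -> f_skew n k j i = ballot_gf j (n - j) k i.
Proof.
move=> le_kn; rewrite /f_skew /ballot_gf -big_filter -[RHS]big_filter.
set SYTs := [seq T <- _ | _].
have maj_row_word T : T \in SYTs -> 'X^(maj T) = 'X^(word_maj (row_word T)) :> {poly rat}.
  by rewrite mem_filter => /andP[/andP[T_SYT _] _]; rewrite /maj descents_row_word.
rewrite (eq_big_seq _ maj_row_word) -(big_map (@row_word n k j) xpredT (fun s => 'X^(word_maj s))).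
apply/perm_big/uniq_perm.
- rewrite map_inj_in_uniq ?filter_uniq ?index_enum_uniq // => T1 T2.
  by rewrite !mem_filter => /andP[/andP[SYT1 _] _] /andP[/andP[SYT2 _] _]; apply: row_word_inj.
- by rewrite filter_uniq ?uniq_bool_words.
move=> s; rewrite mem_filter /ballot_word; apply/mapP/idP => [[T]|].
  rewrite mem_filter => /andP[/andP[T_SYT /eqP des_T] _] ->.
  rewrite count_row_word // ballot_row_word // -descents_row_word // -/(des T) des_T !eqxx /=.
  by have := mem_bool_words (row_word T); rewrite size_mkseq.
case/andP => /and3P[/eqP count_s ballot_s /eqP des_s] s_words.
have size_s := size_bool_words s_words.
exists (word_filling n k j s); last by rewrite row_word_filling.
rewrite mem_filter mem_index_enum andbT word_filling_SYT //=.
by rewrite /des descents_row_word ?word_filling_SYT // row_word_filling // des_s.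
Qed.

Theorem mainTheorem2 (n k j i : nat) (hk : (0 < k)%N) (hkn : (k <= n)%N)
    (hj : (j < n)%N) (hi : (1 <= i)%N) :
  f_skew n k j i =
  'X^(i ^ 2) *
    (qbinom (n - j)%:Z i%:Z * qbinom k%:Z i%:Z
     - qbinom (n + 1)%:Z i%:Z * qbinom (k%:Z - j%:Z - 1) i%:Z).
Proof.
rewrite f_skew_ballot_gf // ballot_gf_formula; last by lia.
rewrite /skew_formula /qbin_prod !qbinomE subnK ?addn1 ?(ltnW hj) //.
case: ltnP => [lt_jk|le_kj].
  have -> : k%:Z - j%:Z - 1 = (k - j.+1)%N%:Z by lia.
  by rewrite qbinomE mulrBr.
by rewrite (@qbinom_gt _ i%:Z) ?subr0 ?mulr0 ?subr0 //; lia.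
Qed.
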